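(* Let $K$ be a $p$-adic field and let $L$ be a totally ramified finite extension of $K$. Then the following are equivalent: (1) there exists a compatible system of angular component maps $(\mathrm{ac}_N)_{N\ge1}$ on $L$ whose restrictions to $K$ determine a compatible system of angular component maps on $K$ (i.e. $\mathrm{ac}_N(K)\subseteq\mathcal{O}_K/(N\mathcal{M}_K)\subseteq \mathcal{O}_L/(N\mathcal{M}_L)$ for all $N$); (2) there exists a uniformizer $\tau$ of $L$ such that $\tau^{[L:K]}\in K$.
   Context: A $p$-adic field is a finite extension of $\mathbb{Q}_p$. For a valued field $K$ with valuation ring $\mathcal{O}_K$ and maximal ideal $\mathcal{M}_K$ and $N\ge1$, let $R_N=\mathcal{O}_K/(N\mathcal{M}_K)$. An angular component map $\mathrm{ac}_N\colon K\to R_N$ is a multiplicative homomorphism $K^\times\to R_N^\times$ whose restriction to $\mathcal{O}_K^\times$ is the natural projection, extended by $\mathrm{ac}_N(0)=0$. A family $(\mathrm{ac}_N)_{N\ge1}$ is a compatible system if it commutes with the natural projections $R_{NM}\to R_N$ for all $N,M$. For $K\le L$ with $\mathcal{O}_K=K\cap\mathcal{O}_L$, one has $N\mathcal{M}_K=K\cap N\mathcal{M}_L$, so $\mathcal{O}_K/(N\mathcal{M}_K)$ is naturally a subring of $\mathcal{O}_L/(N\mathcal{M}_L)$. *)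

From HB Require Import structures.
From mathcomp Require Import all_boot all_order all_algebra all_field.
Set Implicit Arguments. Unset Strict Implicit. Unset Printing Implicit Defensive.
Import Order.TTheory GRing.Theory Num.Theory.
Local Open Scope ring_scope.

(* A (normalized) discrete valuation on a field F is given by a map
   v : F -> int; the value at 0 is irrelevant (0 has valuation +oo). *)
Section Valuation.
Variables (F : fieldType) (v : F -> int).

Definition vring : pred F := [pred x | (x == 0) || (0 <= v x)].
Definition vmax  : pred F := [pred x | (x == 0) || (0 < v x)].
Definition vball (k : int) : pred F := [pred x | (x == 0) || (k <= v x)].

Record discrete_valuation : Prop := DVal {
  dv_mul : forall x y, x != 0 -> y != 0 -> v (x * y) = v x + v y;
  dv_add : forall x y, x != 0 -> y != 0 -> x + y != 0 ->
             Num.min (v x) (v y) <= v (x + y);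
  dv_norm : exists pi, pi != 0 /\ v pi = 1 }.

Definition uniformizer (pi : F) := pi != 0 /\ v pi = 1.

Definition vcomplete :=
  forall u : nat -> F,
    (forall k : int, exists n0, forall m n, (n0 <= m)%N -> (n0 <= n)%N ->
        u m - u n \in vball k) ->
    exists l, forall k : int, exists n0, forall n, (n0 <= n)%N -> u n - l \in vball k.

Definition finite_residue_field :=
  exists s : seq F, forall x, x \in vring -> exists2 y, y \in s & x - y \in vmax.

(* A p-adic field: a field of characteristic 0, complete for a discrete
   valuation with finite residue field (= finite extension of Q_p). *)
Definition padic_field :=
  [/\ [pchar F] =i pred0, discrete_valuation, vcomplete & finite_residue_field].

(* congruence modulo N * M_F inside O_F : x = y in O_F/(N M_F) *)
Definition congr_mod (N : nat) (x y : F) :=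
  exists2 m, m \in vmax & x - y = N%:R * m.

(* ac : F -> F, read as the map x |-> class of (ac x) in R_N = O_F/(N M_F),
   is an angular component map of level N *)
Definition ac_map (N : nat) (ac : F -> F) :=
  [/\ forall x, ac x \in vring,
      congr_mod N (ac 0) 0,
      forall x y, x != 0 -> y != 0 -> congr_mod N (ac (x * y)) (ac x * ac y),
      forall x, x != 0 -> exists2 y, y \in vring & congr_mod N (ac x * y) 1
    & forall u, u != 0 -> v u = 0 -> congr_mod N (ac u) u].

Definition ac_system (ac : nat -> F -> F) :=
  (forall N, (0 < N)%N -> ac_map N (ac N)) /\
  (forall N M, (0 < N)%N -> (0 < M)%N -> forall x, congr_mod N (ac (N * M)%N x) (ac N x)).

End Valuation.

Section Extension.
Variables (K : fieldType) (L : fieldExtType K) (vK : K -> int) (vL : L -> int).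

Definition extends_val := forall a : K, (a%:A \in vring vL) = (a \in vring vK).

(* e(L/K) = [L:K] *)
Definition totally_ramified :=
  exists piK : K, uniformizer vK piK /\ vL piK%:A = (\dim {:L})%:Z.

Definition ac_restricts (ac : nat -> L -> L) :=
  forall N, (0 < N)%N -> forall a : K,
    exists2 b, b \in vring vK & congr_mod vL N (ac N a%:A) b%:A.

End Extension.

(* If tau^e = b lies in K, where e = [L:K], then x |-> x tau^(-v x) is an exactly multiplicative
   angular component on L, and on a in K it equals a b^(-v_K a), which lies in K.
   Conversely, the finite residue field yields an integer q > 0 with v(q) > 0. For a uniformizer
   pi of L, the units ac_(q^m)(pi) form a Cauchy sequence. L is complete, because the terms of
   an expansion sum a_i pi^i (i < e, a_i in K) have valuations in distinct classes mod e, so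
   1, pi, ..., pi^(e-1) is a basis whose coordinates are controlled by the valuation. Let c be the
   limit of this sequence, which is a unit, and put tau = pi / c, so that ac_(q^m)(tau) tends to 1.
   Applying ac_(q^m) to tau^e = w pi_K shows that the unit w is congruent modulo q^m to the inverse
   of an element of K. By the same basis argument K is closed in L, so w, and hence tau^e,
   lies in K. *)

From HB Require Import structures.
From mathcomp Require Import all_boot all_order all_algebra all_field.
From mathcomp Require Import zify ring.
Import Order.TTheory GRing.Theory Num.Theory.
Local Open Scope ring_scope.
Set Implicit Arguments. Unset Strict Implicit.

Section Valuation.
Variables (F : fieldType) (v : F -> int).
Hypothesis hv : discrete_valuation v.
Implicit Types (x y u : F) (k : int).

Lemma valuationM x y : x != 0 -> y != 0 -> v (x * y) = v x + v y.
Proof. exact: dv_mul. Qed.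

Lemma valuation1 : v 1 = 0.
Proof.
by apply: (addrI (v 1)); rewrite addr0 -valuationM ?oner_neq0 ?mulr1.
Qed.

Lemma valuationV x : x != 0 -> v x^-1 = - v x.
Proof.
by move=> x0; apply: (addrI (v x)); rewrite -valuationM ?invr_neq0 // mulfV // valuation1 subrr.
Qed.

Lemma valuationN x : v (- x) = v x.
Proof.
have [->|x0] := eqVneq x 0; first by rewrite oppr0.
have N1 : v (-1) = 0.
  have := (@valuationM (-1) (-1)); rewrite oppr_eq0 oner_neq0 => /(_ isT isT).
  rewrite mulrNN mulr1 valuation1; lia.
by rewrite -mulN1r valuationM ?oppr_eq0 ?oner_neq0 // N1 add0r.
Qed.

Lemma valuationX x (k : nat) : x != 0 -> v (x ^+ k) = k%:Z * v x.
Proof.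
move=> x0; elim: k => [|k IH]; first by rewrite expr0 valuation1 mul0r.
by rewrite exprS valuationM ?expf_neq0 // IH -addn1 PoszD mulrDl mul1r addrC.
Qed.

Lemma valuationXz x (z : int) : x != 0 -> v (x ^ z) = z * v x.
Proof.
move=> x0; case: z => k; first by rewrite -exprnP valuationX.
by rewrite NegzE -exprnN valuationV ?expf_neq0 // valuationX // mulNr.
Qed.

Lemma vringE x : (x \in vring v) = (x \in vball v 0).
Proof. by []. Qed.

Lemma vmaxE x : (x \in vmax v) = (x \in vball v 1).
Proof. by rewrite !inE. Qed.

Lemma vball0 k : 0 \in vball v k.
Proof. by rewrite inE eqxx. Qed.

Lemma vball0_unit u : v u = 0 -> u \in vball v 0.
Proof. by rewrite inE => ->; rewrite lexx orbT. Qed.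

Lemma vball0_unitV u : u != 0 -> v u = 0 -> u^-1 \in vball v 0.
Proof. by move=> u0 vu; rewrite vball0_unit // valuationV // vu oppr0. Qed.

Lemma vball_le a b x : a <= b -> x \in vball v b -> x \in vball v a.
Proof. by rewrite !inE => ab /orP[->//|h]; rewrite (le_trans ab h) orbT. Qed.

Lemma vballN k x : (- x \in vball v k) = (x \in vball v k).
Proof. by rewrite !inE oppr_eq0 valuationN. Qed.

Lemma vballD k x y : x \in vball v k -> y \in vball v k -> x + y \in vball v k.
Proof.
rewrite !inE; have [->|x0] := eqVneq x 0; first by rewrite add0r.
have [->|y0] := eqVneq y 0; first by rewrite addr0 /= => ->; rewrite orbT.
have [//|s0 /= hx hy] := eqVneq (x + y) 0.
by apply: le_trans (dv_add hv x0 y0 s0); rewrite le_min hx hy.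
Qed.

Lemma vballB k x y : x \in vball v k -> y \in vball v k -> x - y \in vball v k.
Proof. by move=> hx hy; rewrite vballD ?vballN. Qed.

Lemma vballM a b x y : x \in vball v a -> y \in vball v b -> x * y \in vball v (a + b).
Proof.
rewrite !inE; have [->|x0] := eqVneq x 0; first by rewrite mul0r eqxx.
have [->|y0] := eqVneq y 0; first by rewrite mulr0 eqxx.
by rewrite /= mulf_eq0 (negbTE x0) (negbTE y0) valuationM //; apply: lerD.
Qed.

Lemma vballX k x j : x \in vball v k -> x ^+ j \in vball v (j%:Z * k).
Proof.
move=> xk; elim: j => [|j IH]; first by rewrite expr0 mul0r vball0_unit ?valuation1.
by rewrite exprS -addn1 PoszD mulrDl mul1r addrC; apply: vballM.
Qed.

Lemma vballD_notin k x y : x \in vball v k -> y \notin vball v k -> x + y \notin vball v k.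
Proof. by move=> xk; apply: contra => /vballB /(_ xk); rewrite addrC addKr. Qed.

Lemma vball_all_eq0 x : (forall k, x \in vball v k) -> x = 0.
Proof.
move=> h; apply/eqP; apply: contraT => x0.
by move: (h (v x + 1)); rewrite inE (negbTE x0) /=; lia.
Qed.

Lemma valuation_unit_near x u : u != 0 -> v u = 0 -> x - u \in vball v 1 ->
  x != 0 /\ v x = 0.
Proof.
move=> u0 vu xu.
have u_notin : u \notin vball v 1 by rewrite inE (negbTE u0) vu.
have x_notin : x \notin vball v 1 by rewrite -(subrK u x) vballD_notin.
have x0 : x != 0 by apply: contraNneq x_notin => ->; apply: vball0.
have : x \in vball v 0.
  by rewrite -(subrK u x); apply: vballD; [apply: vball_le xu | apply: vball0_unit].
by move: x_notin; rewrite !inE (negbTE x0) /=; split => //; lia.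
Qed.

Lemma valuationM_eq0l x y : x != 0 -> y != 0 -> x \in vball v 0 -> y \in vball v 0 ->
  v (x * y) = 0 -> v x = 0.
Proof. by move=> x0 y0; rewrite !inE (negbTE x0) (negbTE y0) valuationM //=; lia. Qed.

Lemma natr_vball0 i : (i%:R : F) \in vball v 0.
Proof.
elim: i => [|i IH]; first exact: vball0.
by rewrite -addn1 natrD vballD // vball0_unit ?valuation1.
Qed.

(* The nonzero term of least valuation is the only one outside the ball of the next radius,
   so it cannot be cancelled by the others. *)
Lemma vball_sum_distinct (I : finType) (t : I -> F) k :
  {in [pred i | t i != 0] &, injective (fun i => v (t i))} ->
  \sum_i t i \in vball v k -> forall i, t i \in vball v k.
Proof.
move=> inj_vt sum_k i; apply: contraT => ti_notin.
have ti0 : t i != 0 by apply: contraNneq ti_notin => ->; apply: vball0.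
case: (@arg_minP _ _ _ i [pred j | t j != 0] (fun j => v (t j)) ti0).
move=> i0 /= ti00 vt_min; set a := v (t i0).
have rest : \sum_(j | j != i0) t j \in vball v (a + 1).
  apply: (big_ind (fun x => x \in vball v (a + 1))); [exact: vball0 | exact: vballD |].
  move=> j ji0; have [->|tj0] := eqVneq (t j) 0; first exact: vball0.
  have : a != v (t j) by apply: contra ji0 => /eqP/inj_vt -> //; rewrite inE.
  by rewrite inE (negbTE tj0) /=; have := vt_min j tj0; lia.
have : t i0 \notin vball v (a + 1) by rewrite inE (negbTE ti00) /=; lia.
move/(vballD_notin rest); rewrite addrC -(bigD1 _ (P := xpredT)) // => /negP[].
apply: vball_le sum_k; move: ti_notin; rewrite inE (negbTE ti0) /=.
by have := vt_min i ti0; lia.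
Qed.

Lemma vball_subr_sym k x y : x - y \in vball v k -> y - x \in vball v k.
Proof. by rewrite -vballN opprB. Qed.

Lemma vball_subr_trans k x y z :
  x - y \in vball v k -> y - z \in vball v k -> x - z \in vball v k.
Proof. by move=> xy yz; rewrite -(subrK y x) -addrA vballD. Qed.

Lemma vball_subrM k x (x' : F) y (y' : F) : x \in vball v 0 -> y' \in vball v 0 ->
  x - x' \in vball v k -> y - y' \in vball v k -> x * y - x' * y' \in vball v k.
Proof.
move=> x0 y'0 xx' yy'.
have -> : x * y - x' * y' = x * (y - y') + (x - x') * y' by ring.
apply: vballD; first by rewrite -[k]add0r vballM.
by rewrite -[k]addr0 vballM.
Qed.

Lemma vball_subrX k x y j : x \in vball v 0 -> y \in vball v 0 ->
  x - y \in vball v k -> x ^+ j - y ^+ j \in vball v k.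
Proof.
move=> x0 y0 xy; elim: j => [|j IH]; first by rewrite !expr0 subrr vball0.
by rewrite !exprS vball_subrM // -(mulr0 j%:Z) vballX.
Qed.

Lemma uniformizer_divr pi c : uniformizer v pi -> c != 0 -> v c = 0 ->
  uniformizer v (pi / c).
Proof.
case=> pi0 vpi c0 vc; split; first by rewrite mulf_neq0 ?invr_neq0.
by rewrite valuationM ?invr_neq0 // valuationV // vc vpi subr0.
Qed.

Lemma congr_mod_eq N x y : x = y -> congr_mod v N x y.
Proof. by move=> ->; exists 0; rewrite ?subrr ?mulr0 // vmaxE vball0. Qed.

Lemma congr_mod_vball N k x y :
  (N%:R : F) \in vball v k -> congr_mod v N x y -> x - y \in vball v (k + 1).
Proof. by move=> Nk [m m1 ->]; rewrite vballM -?vmaxE. Qed.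

Lemma congr_mod_vballW N k x y :
  (N%:R : F) \in vball v k -> congr_mod v N x y -> x - y \in vball v k.
Proof. by move=> Nk /(congr_mod_vball Nk); apply: vball_le; rewrite lerDl. Qed.

Lemma finite_residue_natr_vmax :
  finite_residue_field v -> exists2 q : nat, (0 < q)%N & (q%:R : F) \in vmax v.
Proof.
case=> s res_s.
have /fin_all_exists [r rP] (i : 'I_(size s).+1) :
    exists y, y \in s /\ (i%:R - y) \in vmax v.
  by have [y] := res_s _ (natr_vball0 i); exists y.
have : ~~ injectiveb r.
  have sub : {subset codom r <= s} by move=> _ /codomP[i ->]; case: (rP i).
  by apply/negP => /uniq_leq_size/(_ sub); rewrite size_codom card_ord ltnn.
have diff (i j : 'I_(size s).+1) : (i < j)%N -> r i = r j ->
    exists2 q : nat, (0 < q)%N & (q%:R : F) \in vmax v.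
  move=> ij rij; exists (j - i)%N; first by rewrite subn_gt0.
  have -> : ((j - i)%N%:R : F) = (j%:R - r j) - (i%:R - r i).
    by rewrite natrB 1?ltnW // rij; ring.
  by rewrite vmaxE vballB // -vmaxE; [case: (rP j) | case: (rP i)].
case/injectivePn => i [j]; case: (ltngtP i j) => [ij _ rij|ji _ rij|/val_inj ->].
- exact: diff ij rij.
- exact: diff ji (esym rij).
- by rewrite eqxx.
Qed.

End Valuation.

Section AngularComponent.
Variables (F : fieldType) (v : F -> int) (N : nat) (g : F -> F).
Hypotheses (hv : discrete_valuation v) (hg : ac_map v N g).

Lemma ac_map_vring (x : F) : g x \in vball v 0.
Proof. by case: hg. Qed.

Lemma ac_map_unit (x : F) : x != 0 -> g x != 0 /\ v (g x) = 0.
Proof.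
case: hg => _ _ _ g_inv _ x0; have [y y0 gxy] := g_inv x x0.
have := congr_mod_vball hv (natr_vball0 hv N) gxy; rewrite add0r => gxy1.
have [] := valuation_unit_near hv (oner_neq0 F) (valuation1 hv) gxy1.
rewrite mulf_eq0 negb_or => /andP[gx0 y0'] vgxy.
by split=> //; apply: valuationM_eq0l vgxy; rewrite ?ac_map_vring.
Qed.

Variable k : int.
Hypothesis Nk : (N%:R : F) \in vball v k.

Lemma ac_mapM_vball (x y : F) : x != 0 -> y != 0 -> g (x * y) - g x * g y \in vball v k.
Proof. by case: hg => _ _ gM _ _ x0 y0; apply: congr_mod_vballW (gM _ _ x0 y0). Qed.

Lemma ac_map_unit_vball (u : F) : u != 0 -> v u = 0 -> g u - u \in vball v k.
Proof. by case: hg => _ _ _ _ gu u0 vu; apply: congr_mod_vballW (gu _ u0 vu). Qed.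

Lemma ac_mapX_vball (x : F) j : x != 0 -> g (x ^+ j) - g x ^+ j \in vball v k.
Proof.
move=> x0; elim: j => [|j IH].
  by rewrite !expr0 ac_map_unit_vball ?oner_neq0 ?valuation1.
rewrite !exprSr; apply: (vball_subr_trans hv (ac_mapM_vball (expf_neq0 j x0) x0)).
by apply: (vball_subrM hv); rewrite ?ac_map_vring ?subrr ?vball0.
Qed.

Lemma ac_map_factor_vball (x c : F) : x != 0 -> c != 0 -> v c = 0 ->
  g (x * c) - c \in vball v k -> g x - 1 \in vball v k.
Proof.
move=> x0 c0 vc gxc.
have gx_c : g x * c - c \in vball v k.
  apply: (vball_subr_trans hv) gxc; apply: (vball_subr_sym hv).
  apply: (vball_subr_trans hv (ac_mapM_vball x0 c0)).
  apply: (vball_subrM hv); rewrite ?ac_map_vring ?subrr ?vball0 //.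
  - exact: vball0_unit.
  - exact: ac_map_unit_vball.
have -> : g x - 1 = (g x * c - c) * c^-1 by rewrite mulrBl mulfK ?mulfV.
by rewrite -[k]addr0 (vballM hv) ?(vball0_unitV hv).
Qed.

End AngularComponent.

Lemma natrX_vball (F : fieldType) (v : F -> int) (q m : nat) :
  discrete_valuation v -> (q%:R : F) \in vmax v -> ((q ^ m)%N%:R : F) \in vball v m.
Proof. by move=> hv q1; rewrite natrX -[m%:Z]mulr1 vballX -?vmaxE. Qed.

Lemma ac_system_vball (F : fieldType) (v : F -> int) (ac : nat -> F -> F) (q : nat) :
  discrete_valuation v -> ac_system v ac -> (0 < q)%N -> (q%:R : F) \in vmax v ->
  forall m m' x, (m <= m')%N -> ac (q ^ m')%N x - ac (q ^ m)%N x \in vball v m.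
Proof.
move=> hv [_ ac_compat] q_gt0 q1 m m' x le_mm'.
rewrite -(subnKC le_mm') expnD; apply: vball_le (congr_mod_vball hv (natrX_vball m hv q1) _).
  by rewrite lerDl.
by apply: ac_compat; rewrite expn_gt0 q_gt0.
Qed.

Section UniformizerAc.
Variables (F : fieldType) (v : F -> int) (tau : F).
Hypotheses (hv : discrete_valuation v) (htau : uniformizer v tau).
Implicit Types x y u : F.

Definition uniformizer_ac (x : F) : F := x * tau ^ (- v x).

Lemma uniformizer_acM x y : x != 0 -> y != 0 ->
  uniformizer_ac (x * y) = uniformizer_ac x * uniformizer_ac y.
Proof.
case: htau => tau0 _ x0 y0.
by rewrite /uniformizer_ac (valuationM hv) // opprD exprzDr ?unitfE // mulrACA.
Qed.

Lemma uniformizer_ac_unit x : x != 0 ->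
  uniformizer_ac x != 0 /\ v (uniformizer_ac x) = 0.
Proof.
case: htau => tau0 vtau x0; split; first by rewrite mulf_neq0 ?expfz_neq0.
by rewrite (valuationM hv) ?expfz_neq0 // (valuationXz hv) // vtau mulr1 subrr.
Qed.

Lemma uniformizer_ac_id u : v u = 0 -> uniformizer_ac u = u.
Proof. by move=> vu; rewrite /uniformizer_ac vu oppr0 expr0z mulr1. Qed.

Lemma uniformizer_ac_system : ac_system v (fun=> uniformizer_ac).
Proof.
split=> [N _|N M _ _ x]; last exact: congr_mod_eq.
have ac_vring x : uniformizer_ac x \in vring v.
  have [->|x0] := eqVneq x 0; first by rewrite /uniformizer_ac mul0r vringE vball0.
  by rewrite vball0_unit ?(uniformizer_ac_unit x0).2.
split=> // [|x y x0 y0|x x0|u _ vu].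
- by apply: congr_mod_eq; rewrite /uniformizer_ac mul0r.
- exact/congr_mod_eq/uniformizer_acM.
- have [ac0 vac] := uniformizer_ac_unit x0.
  exists (uniformizer_ac x)^-1; last by apply: congr_mod_eq; rewrite mulfV.
  exact: vball0_unitV.
- exact/congr_mod_eq/uniformizer_ac_id.
Qed.

End UniformizerAc.

Section Extension.
Variables (K : fieldType) (L : fieldExtType K) (vK : K -> int) (vL : L -> int).
Hypotheses (hK : discrete_valuation vK) (hL : discrete_valuation vL)
  (ext : extends_val vK vL).
Variable piK : K.
Hypotheses (piK0 : piK != 0) (vpiK : vK piK = 1) (vLpiK : vL piK%:A = (\dim {:L})%:Z).
Local Notation n := (\dim {:L}).
Implicit Types (a b u : K) (x tau w c : L) (k : int).

Lemma alg_eq0 (a : K) : (a%:A == 0 :> L) = (a == 0).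
Proof. exact: (fmorph_eq0 (in_alg L)). Qed.

Lemma algM (a b : K) : (a * b)%:A = a%:A * b%:A :> L.
Proof. exact: (rmorphM (in_alg L)). Qed.

Lemma algV (a : K) : a^-1%:A = a%:A^-1 :> L.
Proof. exact: (fmorphV (in_alg L)). Qed.

Lemma algB (a b : K) : (a - b)%:A = a%:A - b%:A :> L.
Proof. exact: (rmorphB (in_alg L)). Qed.

Lemma valuation_alg_unit (u : K) : u != 0 -> vK u = 0 -> vL u%:A = 0.
Proof.
move=> u0 vu; have in_vring (a : K) : vK a = 0 -> a%:A \in vball vL 0.
  by move=> va; rewrite -vringE ext vball0_unit.
apply: (valuationM_eq0l hL (y := u^-1%:A)); rewrite ?alg_eq0 ?invr_eq0 ?in_vring //.
- by rewrite (valuationV hK) // vu oppr0.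
- by rewrite -algM mulfV // scale1r (valuation1 hL).
Qed.

Lemma valuation_alg (a : K) : a != 0 -> vL a%:A = n%:Z * vK a.
Proof.
move=> a0; set u := a * piK ^ (- vK a).
have u0 : u != 0 by rewrite mulf_neq0 ?expfz_neq0.
have vu : vK u = 0 by rewrite (valuationM hK) ?expfz_neq0 // (valuationXz hK) // vpiK mulr1 subrr.
have ea : a = u * piK ^ vK a by rewrite -mulrA -exprzDr ?unitfE // addNr expr0z mulr1.
rewrite {1}ea algM (valuationM hL) ?alg_eq0 ?expfz_neq0 // valuation_alg_unit //.
by rewrite -[_%:A]/(in_alg L _) fmorphXz (valuationXz hL) ?alg_eq0 // vLpiK add0r mulrC.
Qed.

Lemma vball_alg (a : K) k : a \in vball vK k -> a%:A \in vball vL (n%:Z * k).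
Proof.
rewrite !inE alg_eq0; have [//|a0 /=] := eqVneq a 0.
by rewrite valuation_alg // ler_pM2l // ltz_nat adim_gt0.
Qed.

Lemma vmax_alg (a : K) : a \in vmax vK -> a%:A \in vmax vL.
Proof.
rewrite !vmaxE => /vball_alg; apply: vball_le.
by rewrite mulr1 lez_nat adim_gt0.
Qed.

Lemma uniformizer_ac_restricts tau b : uniformizer vL tau -> tau ^+ n = b%:A ->
  ac_restricts vK vL (fun=> uniformizer_ac vL tau).
Proof.
move=> htau tau_n N N_gt0 a.
have [ac_vring _ _ _ _] := (uniformizer_ac_system hL htau).1 N N_gt0.
have [->|a0] := eqVneq a 0.
  exists 0; rewrite ?vringE ?vball0 //.
  by apply: congr_mod_eq; rewrite /uniformizer_ac !scale0r mul0r.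
have ac_a : uniformizer_ac vL tau a%:A = (a * b ^ (- vK a))%:A.
  rewrite /uniformizer_ac valuation_alg // -mulrN -exprz_exp -exprnP tau_n algM.
  by rewrite -[(b ^ _)%:A]/(in_alg L _) fmorphXz.
by exists (a * b ^ (- vK a)); rewrite -?ext -?ac_a ?ac_vring //; apply: congr_mod_eq.
Qed.

Variable pi : L.
Hypotheses (pi0 : pi != 0) (vpi : vL pi = 1).

Lemma valuation_term (b : K) i : b != 0 -> vL (b%:A * pi ^+ i) = n%:Z * vK b + i%:Z.
Proof.
move=> b0; rewrite (valuationM hL) ?alg_eq0 ?expf_neq0 // valuation_alg //.
by rewrite (valuationX hL) // vpi mulr1.
Qed.

Lemma term_vball (b : K) i k : 0 <= k -> b \in vball vK k -> b%:A * pi ^+ i \in vball vL k.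
Proof.
move=> k0; rewrite !inE mulf_eq0 alg_eq0; have [//|b0 /=] := eqVneq b 0.
rewrite valuation_term //; have : (0 < n)%N := adim_gt0 _; nia.
Qed.

Lemma vball_term (b : K) i k : (i < n)%N ->
  b%:A * pi ^+ i \in vball vL (n%:Z * k) -> b \in vball vK k.
Proof.
move=> lt_in; rewrite !inE mulf_eq0 alg_eq0 expf_eq0 (negbTE pi0) andbF orbF.
by have [//|b0 /=] := eqVneq b 0; rewrite valuation_term //; nia.
Qed.

Lemma vball_expansion (a : 'I_n -> K) k :
  \sum_i (a i)%:A * pi ^+ i \in vball vL k -> forall i, (a i)%:A * pi ^+ i \in vball vL k.
Proof.
apply: (vball_sum_distinct hL) => i j; rewrite !inE !mulf_eq0 !alg_eq0 !negb_or.
case/andP=> ai0 _ /andP[aj0 _]; rewrite !valuation_term // => /(congr1 (modz^~ n)).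
by rewrite ![n%:Z * _]mulrC !modzMDl !modz_small ?ltz_nat ?ltn_ord // => -[/val_inj].
Qed.

Definition pi_powers : n.-tuple L := [tuple pi ^+ i | i < n].

Lemma pi_powers_nth (i : 'I_n) : pi_powers`_i = pi ^+ i.
Proof. by rewrite -tnth_nth tnth_mktuple. Qed.

Lemma free_pi_powers : free pi_powers.
Proof.
apply/freeP => c sum0 i; apply/eqP; rewrite -alg_eq0.
have sum_vball k : \sum_j (c j)%:A * pi ^+ j \in vball vL k.
  rewrite (eq_bigr (fun j => c j *: pi_powers`_j)) ?sum0 ?vball0 // => j _.
  by rewrite pi_powers_nth mulr_algl.
have /eqP := vball_all_eq0 (fun k => vball_expansion (sum_vball k) i).
by rewrite mulf_eq0 expf_eq0 (negbTE pi0) andbF orbF.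
Qed.

Lemma pi_expansion x : x = \sum_(i < n) (coord pi_powers i x)%:A * pi ^+ i.
Proof.
have : basis_of fullv pi_powers.
  by rewrite basisEfree free_pi_powers subvf size_tuple leqnn.
move/span_basis => span_full; rewrite {1}(coord_span (_ : x \in span pi_powers)).
  by apply: eq_bigr => i _; rewrite pi_powers_nth mulr_algl.
by rewrite span_full memvf.
Qed.

Lemma coord_term_vball x k i : x \in vball vL k ->
  (coord pi_powers i x)%:A * pi ^+ i \in vball vL k.
Proof. by rewrite {1}(pi_expansion x) => /vball_expansion; apply. Qed.

Lemma vcomplete_ext : vcomplete vK -> vcomplete vL.
Proof.
move=> Kc u u_cauchy; pose a m i := coord pi_powers i (u m).
have /fin_all_exists [l a_lim] (i : 'I_n) : exists l, forall k, exists m0, forall m,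
    (m0 <= m)%N -> a m i - l \in vball vK k.
  apply: Kc => k; have [m0 hm0] := u_cauchy (n%:Z * k).
  exists m0 => m m' hm hm'; apply: (vball_term (ltn_ord i)).
  by rewrite /a -linearB coord_term_vball ?hm0.
exists (\sum_i (l i)%:A * pi ^+ i) => k.
have /fin_all_exists [m0 hm0] (i : 'I_n) : exists m0, forall m,
    (m0 <= m)%N -> a m i - l i \in vball vK (Num.max k 0) by apply: a_lim.
exists (\max_i m0 i) => m hm.
rewrite {1}(pi_expansion (u m)) -sumrB.
apply: (big_ind (fun y => y \in vball vL k)) => [|y z|i _]; [exact: vball0|exact: vballD|].
rewrite -mulrBl -algB; apply: (@vball_le _ _ _ (Num.max k 0)); first by rewrite le_max lexx.
by rewrite term_vball ?le_max ?lexx ?orbT // hm0 // (leq_trans _ hm) // leq_bigmax.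
Qed.

Lemma alg_closed x : (forall k, exists b : K, x - b%:A \in vball vL k) ->
  exists b : K, x = b%:A.
Proof.
move=> approx; pose i0 : 'I_n := Ordinal (adim_gt0 _ : (0 < n)%N).
have coord_alg (b : K) i : coord pi_powers i b%:A = b * (i0 == i)%:R.
  have -> : b%:A = b *: pi_powers`_i0 by rewrite pi_powers_nth expr0.
  by rewrite linearZ; congr (_ * _); apply: coord_free free_pi_powers.
have coord0 i : i != i0 -> coord pi_powers i x = 0.
  move=> ii0; apply/eqP; rewrite -alg_eq0.
  suff /eqP : (coord pi_powers i x)%:A * pi ^+ i = 0.
    by rewrite mulf_eq0 expf_eq0 (negbTE pi0) andbF orbF.
  apply: (@vball_all_eq0 _ vL) => k; have [b /(coord_term_vball i)] := approx k.
  by rewrite linearB /= coord_alg eq_sym (negbTE ii0) mulr0 subr0.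
exists (coord pi_powers i0 x); rewrite {1}(pi_expansion x) (bigD1 i0) //= big1 ?addr0.
  by rewrite expr0 mulr1.
by move=> i ii0; rewrite coord0 // scale0r mul0r.
Qed.

Lemma ac_map_alg_approx N (g : L -> L) k tau w :
  ac_map vL N g -> (forall a : K, exists2 b, b \in vring vK & congr_mod vL N (g a%:A) b%:A) ->
  (N%:R : L) \in vball vL k -> 1 <= k ->
  tau != 0 -> w != 0 -> vL w = 0 -> tau ^+ n = w * piK%:A -> g tau - 1 \in vball vL k ->
  exists b : K, w - b%:A \in vball vL k.
Proof.
move=> hg g_alg Nk k1 tau0 w0 vw tau_n g_tau.
have [beta beta_vring g_piK] := g_alg piK.
have piK0' : piK%:A != 0 :> L by rewrite alg_eq0.
have g_tau_n : g (tau ^+ n) - 1 \in vball vL k.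
  apply: (vball_subr_trans hL (ac_mapX_vball hL hg Nk _ tau0)).
  rewrite -(expr1n _ n) (vball_subrX hL) ?(ac_map_vring hg) //.
  exact: vball0_unit (valuation1 hL).
have g_w_beta : g (tau ^+ n) - w * beta%:A \in vball vL k.
  rewrite tau_n; apply: (vball_subr_trans hL (ac_mapM_vball hL hg Nk w0 piK0')).
  apply: (vball_subrM hL); first exact: ac_map_vring hg w.
  - by rewrite -ext in beta_vring.
  - by apply: (ac_map_unit_vball hL hg Nk).
  - by apply: (congr_mod_vballW hL Nk).
have w_beta1 : w * beta%:A - 1 \in vball vL k.
  exact: (vball_subr_trans hL (vball_subr_sym hL g_w_beta)).
have [wb0 vwb] := valuation_unit_near hL (oner_neq0 L) (valuation1 hL) (vball_le k1 w_beta1).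
have beta0 : beta%:A != 0 :> L by apply: contraNneq wb0 => ->; rewrite mulr0.
have vbeta : vL beta%:A = 0 by move: vwb; rewrite (valuationM hL) // vw add0r.
exists beta^-1; have -> : w - beta^-1%:A = (w * beta%:A - 1) * beta%:A^-1.
  by rewrite algV mulrBl mulfK // mul1r.
by rewrite -[k]addr0 (vballM hL) ?(vball0_unitV hL).
Qed.

Section AcSystem.
Variables (ac : nat -> L -> L) (q : nat).
Hypotheses (Kc : vcomplete vK) (q_gt0 : (0 < q)%N) (q1 : (q%:R : L) \in vmax vL).
Hypotheses (hac : ac_system vL ac) (hres : ac_restricts vK vL ac).

Let qX_gt0 m : (0 < q ^ m)%N. Proof. by rewrite expn_gt0 q_gt0. Qed.
Let acX m : ac_map vL (q ^ m) (ac (q ^ m)%N). Proof. exact: hac.1. Qed.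

Lemma ac_uniformizer_limit : exists c, [/\ c != 0, vL c = 0 &
  forall k, exists m0, forall m, (m0 <= m)%N -> ac (q ^ m)%N pi - c \in vball vL k].
Proof.
have [c c_lim] : exists c, forall k, exists m0, forall m,
    (m0 <= m)%N -> ac (q ^ m)%N pi - c \in vball vL k.
  apply: (vcomplete_ext Kc) => k; exists `|k|%N => m m' hm hm'.
  have [le_mm'|lt_m'm] := leqP m m'.
    apply: (vball_subr_sym hL); apply: vball_le (ac_system_vball hL hac q_gt0 q1 _ le_mm').
    lia.
  by apply: vball_le (ac_system_vball hL hac q_gt0 q1 _ (ltnW lt_m'm)); lia.
have [m0 acm0_c] := c_lim 1; have [acm00 vacm0] := ac_map_unit hL (acX m0) pi0.
have := valuation_unit_near hL acm00 vacm0 (vball_subr_sym hL (acm0_c _ (leqnn m0))).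
by case=> c0 vc; exists c.
Qed.

Lemma ac_uniformizer_pow_approx c : c != 0 -> vL c = 0 ->
  (forall k, exists m0, forall m, (m0 <= m)%N -> ac (q ^ m)%N pi - c \in vball vL k) ->
  forall k, exists b : K, (pi / c) ^+ n / piK%:A - b%:A \in vball vL k.
Proof.
move=> c0 vc c_lim k; set tau := pi / c; set w := tau ^+ n / piK%:A.
have [tau0 vtau] : uniformizer vL tau by apply: uniformizer_divr.
have piK0' : piK%:A != 0 :> L by rewrite alg_eq0.
have w0 : w != 0 by rewrite mulf_neq0 ?invr_neq0 ?expf_neq0.
have vw : vL w = 0.
  rewrite (valuationM hL) ?invr_neq0 ?expf_neq0 // (valuationV hL) // (valuationX hL) //.
  by rewrite vtau vLpiK mulr1 subrr.
pose k1 := Num.max k 1; have [m0 acm_c] := c_lim k1; pose m := maxn m0 `|k1|%N.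
have Nk1 : ((q ^ m)%N%:R : L) \in vball vL k1.
  by apply: vball_le (natrX_vball m hL q1); rewrite /m; lia.
have ge1_k1 : 1 <= k1 by rewrite le_max lexx orbT.
have tau_n : tau ^+ n = w * piK%:A by rewrite divfK.
have ac_tau1 : ac (q ^ m)%N tau - 1 \in vball vL k1.
  apply: (ac_map_factor_vball hL (acX m) Nk1 tau0 c0 vc).
  by rewrite divfK // acm_c // leq_maxl.
have [b wb] := ac_map_alg_approx (acX m) (hres (qX_gt0 m)) Nk1 ge1_k1 tau0 w0 vw tau_n ac_tau1.
by exists b; apply: vball_le wb; rewrite le_max lexx.
Qed.

Lemma ac_restricts_uniformizer_pow :
  exists tau, uniformizer vL tau /\ exists a : K, tau ^+ n = a%:A.
Proof.
have [c [c0 vc c_lim]] := ac_uniformizer_limit.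
have [b wb] := alg_closed (ac_uniformizer_pow_approx c0 vc c_lim).
exists (pi / c); split; first exact: uniformizer_divr.
by exists (b * piK); rewrite algM -wb divfK // alg_eq0.
Qed.

End AcSystem.

End Extension.

Theorem lemma3p2 (K : fieldType) (L : fieldExtType K)
    (vK : K -> int) (vL : L -> int) :
  padic_field vK -> discrete_valuation vL -> extends_val vK vL ->
  totally_ramified vK vL ->
  (exists ac : nat -> L -> L, ac_system vL ac /\ ac_restricts vK vL ac) <->
  (exists tau : L, uniformizer vL tau /\ exists a : K, tau ^+ \dim {:L} = a%:A).
Proof.
case=> _ hK Kc resK hL ext [piK [[piK0 vpiK] vLpiK]]; split.
- case=> ac [hac hres]; have [pi [pi0 vpi]] := dv_norm hL.
  have [q q_gt0 /(vmax_alg hK hL ext piK0 vpiK vLpiK)] := finite_residue_natr_vmax hK resK.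
  rewrite -[(q%:R : K)%:A]/(in_alg L _) rmorph_nat => qL1.
  exact (ac_restricts_uniformizer_pow hK hL ext piK0 vpiK vLpiK pi0 vpi Kc q_gt0 qL1 hac hres).
- case=> tau [htau [b tau_n]]; exists (fun=> uniformizer_ac vL tau).
  split; first exact: uniformizer_ac_system hL htau.
  exact (uniformizer_ac_restricts hK hL ext piK0 vpiK vLpiK htau tau_n).
Qed.
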